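(* Let $\mathcal{X},\mathcal{Y}$ be domains of $\mathbb{R}^d$ (or of the torus), $\mathcal{H}$ a real Hilbert space, $\varphi:\mathcal{X}\to\mathcal{H}$ smooth, $\Phi m=\int_{\mathcal{X}}\varphi\,dm$, and let $T:\mathcal{X}\to\mathcal{Y}$ be a bijection, with $T$ and $T^{-1}$ differentiable, such that the Jacobian of $T^{-1}$ is invertible everywhere. Let $\lambda>0$, $y\in\mathcal{H}$ and consider $$(\mathrm{A})\ \min_{m\in\mathcal{M}(\mathcal{X})}\tfrac12\|y-\Phi m\|^2_{\mathcal{H}}+\lambda|m|(\mathcal{X}),\qquad(\mathrm{B})\ \min_{m\in\mathcal{M}(\mathcal{Y})}\tfrac12\|y-(\Phi\circ T^{-1}_\sharp)m\|^2_{\mathcal{H}}+\lambda|m|(\mathcal{Y}).$$ If $\mu$ solves (A), then $\nu=T_\sharp\mu$ solves (B), and the dual certificates satisfy $\eta_D^{\Phi\circ T^{-1}_\sharp,y}=\eta_D^{\Phi,y}\circ T^{-1}$. Moreover, if $y=\Phi m_{a,Z}$ for some $a\in\mathbb{R}^N$ and $Z=(z_1,\dots,z_N)\in\mathcal{X}^N$, the pre-certificates satisfy $\eta_V^{\Phi\circ T^{-1}_\sharp,y}=\eta_V^{\Phi,y}\circ T^{-1}$.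
   Context: $T_\sharp\mu$ is the pushforward: $\int f\,d(T_\sharp\mu)=\int f\circ T\,d\mu$; thus $(\Phi\circ T^{-1}_\sharp)m=\int_{\mathcal{Y}}\varphi(T^{-1}(u))\,dm(u)$. $m_{a,Z}=\sum_ia_i\delta_{z_i}$, and $y=\Phi m_{a,Z}=(\Phi\circ T^{-1}_\sharp)m_{a,TZ}$ with $TZ=(Tz_i)_i$. For an operator $A$ of the form $m\mapsto\int\phi\,dm$ with kernel $\phi$, $(A^*p)(x)=\langle\phi(x),p\rangle$. The dual certificate of the problem with operator $A$ is $\eta_D^{A,y}=\frac1\lambda A^*(y-Am)$ for $m$ a solution. The pre-certificate $\eta_V^{\Phi,y}=\Phi^*p$ where $p$ has minimal norm subject to $(\Phi^*p)(z_i)=1$, $\nabla(\Phi^*p)(z_i)=0$ for all $i$; $\eta_V^{\Phi\circ T^{-1}_\sharp,y}$ is defined in the same way with operator $\Phi\circ T^{-1}_\sharp$ and positions $Tz_i$. *)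

From HB Require Import structures.
From mathcomp Require Import all_boot all_order all_algebra.
From mathcomp Require Import all_classical all_reals all_analysis.
Set Implicit Arguments.
Unset Strict Implicit.
Unset Printing Implicit Defensive.
Import Order.TTheory GRing.Theory Num.Theory numFieldNormedType.Exports.
Local Open Scope classical_set_scope.
Local Open Scope ring_scope.

Definition Rd (R : realType) (d : nat) : measurableType _ :=
  g_sigma_algebraType (@open 'rV[R]_d).

(** A real Hilbert space: a complete normed space whose norm is induced by a
    symmetric bilinear form [ip] (which is then automatically positive
    definite). *)
Definition is_hilbert_inner_product (R : realType) (H : completeNormedModType R)
    (ip : H -> H -> R) : Prop :=
  [/\ forall x y, ip x y = ip y x,
      forall a x y z, ip (a *: x + y) z = a * ip x z + ip y z &
      forall x, `|x| ^+ 2 = ip x x].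

Definition is_domain (R : realType) (d : nat) (D : set 'rV[R]_d) : Prop :=
  [/\ D !=set0, open D & connected D].

Section blasso.
Context {R : realType} {d : nat}.
Local Notation V := 'rV[R]_d.
Local Notation T := (Rd R d).

(** [m] belongs to M(D): a finite signed Borel measure (charge) on R^d
    carried by D. *)
Definition concentrated (D : set V) (m : {charge set T -> \bar R}) : Prop :=
  forall A : set T, measurable A -> m A = m (A `&` D).

Definition total_variation (D : set V) (m : {charge set T -> \bar R}) : \bar R :=
  ereal_sup [set s | exists n (E : 'I_n -> set T),
     [/\ forall i, measurable (E i), trivIset [set: 'I_n] E,
         \bigcup_i E i = D & s = (\sum_(i < n) `|m (E i)|)%E]].

Lemma hahn_ex (m : {charge set T -> \bar R}) :
  exists PN : set T * set T, hahn_decomposition m PN.1 PN.2.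
Proof. by have [P [N h]] := Hahn_decomposition m; exists (P, N). Qed.

Definition hahn_pickP (m : {charge set T -> \bar R}) :=
  proj2_sig (cid (hahn_ex m)).

Definition cintegral (m : {charge set T -> \bar R}) (D : set V) (f : V -> R)
    : \bar R :=
  (\int[jordan_pos (hahn_pickP m)]_(x in (D : set T)) (f x)%:E
   - \int[jordan_neg (hahn_pickP m)]_(x in (D : set T)) (f x)%:E)%E.

Definition push (D : set V) (f : V -> V) (m : set T -> \bar R) : set T -> \bar R :=
  fun A => m ((D : set T) `&` (f @^-1` A : set T)).

Section push_charge.
Variables (D : set V) (f : V -> V) (mD : measurable (D : set T))
  (mf : measurable_fun (D : set T) (f : T -> T)) (m : {charge set T -> \bar R}).

Let push0 : push D f m set0 = 0%E.
Proof. by rewrite /push preimage_set0 setI0 charge0. Qed.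

Let push_finite (A : set T) : measurable A -> push D f m A \is a fin_num.
Proof. by move=> mA; apply: fin_num_measure; exact: mf. Qed.

Let push_sigma_additive : semi_sigma_additive (push D f m).
Proof.
move=> F mF tF mUF; rewrite /push preimage_bigcup setI_bigcupr.
apply: charge_semi_sigma_additive.
- by move=> n; exact: mf.
- apply/trivIsetP => /= i j _ _ ij.
  rewrite setIACA setIid -preimage_setI.
  by move/trivIsetP : tF => /(_ _ _ _ _ ij) ->//; rewrite preimage_set0 setI0.
- by rewrite -setI_bigcupr -preimage_bigcup; exact: mf.
Qed.

HB.instance Definition _ := isCharge.Build _ _ _ (push D f m)
  push0 push_finite push_sigma_additive.

Definition push_charge : {charge set T -> \bar R} := push D f m.

End push_charge.

Variables (H : completeNormedModType R) (ip : H -> H -> R).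

(** the operator m |-> int_D k dm (weak/Pettis sense: <int k dm, p> = int <k,p> dm) *)
Definition opK (D : set V) (k : V -> H) (m : {charge set T -> \bar R}) : H :=
  xget 0 [set h | forall p, (ip h p)%:E = cintegral m D (fun x => ip (k x) p)].

Definition blasso_obj (y : H) (lam : R) (D : set V) (k : V -> H)
    (m : {charge set T -> \bar R}) : \bar R :=
  ((2^-1 * `|y - opK D k m| ^+ 2)%:E + lam%:E * total_variation D m)%E.

Definition blasso_solution (y : H) (lam : R) (D : set V) (k : V -> H)
    (m : {charge set T -> \bar R}) : Prop :=
  concentrated D m /\
  forall m', concentrated D m' ->
    (blasso_obj y lam D k m <= blasso_obj y lam D k m')%E.

Definition dual_cert (y : H) (lam : R) (D : set V) (k : V -> H)
    (m : {charge set T -> \bar R}) : V -> R :=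
  fun x => lam^-1 * ip (k x) (y - opK D k m).

Definition adjK (k : V -> H) (p : H) : V -> R := fun x => ip (k x) p.

Definition precert_admissible (k : V -> H) (N : nat) (Z : 'I_N -> V) (p : H)
    : Prop :=
  forall i, adjK k p (Z i) = 1 /\ forall v : V, 'd (adjK k p) (Z i) v = 0.

(** p has minimal norm among admissible vectors; then eta_V = K^* p *)
Definition precert_minnorm (k : V -> H) (N : nat) (Z : 'I_N -> V) (p : H)
    : Prop :=
  precert_admissible k Z p /\
  forall q, precert_admissible k Z q -> `|p| <= `|q|.

End blasso.

From Pilot Require Import Defs.
From HB Require Import structures.
From mathcomp Require Import all_boot all_order all_algebra.
From mathcomp Require Import all_classical all_reals all_analysis.
From mathcomp Require Import lra measurable_realfun.
Import Order.TTheory GRing.Theory Num.Theory numFieldNormedType.Exports.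
Local Open Scope classical_set_scope.
Local Open Scope ring_scope.

(** The change of variables [T] identifies the two problems.  The pushforward
    [T_#] is a bijection from charges carried by [X] to charges carried by [Y]
    (with inverse [Tinv_#]) that preserves the total variation, and, applying the
    change-of-variables formula to both Jordan parts, [(Phi o Tinv_#) (T_# m)]
    equals [Phi m].  So [T_#] maps the objective (A) onto the objective (B):
    solutions go to solutions with the same residual, whence the same dual
    certificate up to composition with [Tinv].
    For the pre-certificates, the chain rule and the invertibility of the
    Jacobian of [Tinv] show that both problems have the same admissible set of
    vectors [p]; it is an affine subspace of [H], and by the parallelogram law
    its element of minimal norm is unique. *)

Section integral_push_on.
Local Open Scope ereal_scope.
Context {d1 d2 : measure_display} {T1 : measurableType d1}
  {T2 : measurableType d2} {R : realType}.
Variables (mu : {measure set T1 -> \bar R}) (nu : {measure set T2 -> \bar R}).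
Variables (D : set T1) (D' : set T2) (f : T1 -> T2).
Hypotheses (mD : measurable D) (mD' : measurable D') (mf : measurable_fun D f).
Hypothesis fD : forall x, D x -> D' (f x).
Hypothesis nuE : forall A, measurable A -> nu A = mu (D `&` f @^-1` A).

Lemma ge0_integral_push_on (h : T2 -> \bar R) :
  measurable_fun D' h -> (forall y, D' y -> 0 <= h y) ->
  \int[nu]_(y in D') h y = \int[mu]_(x in D) h (f x).
Proof.
move=> mh h0.
have mF : measurable_fun setT (f \_ D) by apply/(measurable_restrictT f mD).
have FD x : D x -> (f \_ D) x = f x by move=> Dx; rewrite patchE mem_set.
transitivity (\int[pushforward (mrestr mu mD) (f \_ D)]_(y in D') h y).
  apply: eq_measure_integral => A mA _; rewrite nuE // /pushforward /mrestr setIC.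
  congr (mu _); apply/seteqP.
  by split=> x [Ax Dx]; split=> //; move: Ax; rewrite /= FD.
rewrite ge0_integral_pushforward //; last by move=> y /set_mem; exact: h0.
have mFD' : measurable ((f \_ D) @^-1` D') by rewrite -[_ @^-1` _]setTI; exact: mF.
have FD'D : (f \_ D) @^-1` D' `\` ~` D = D.
  apply/seteqP; split=> x /=; first by case=> _ /contrapT.
  by move=> Dx; split=> [|/(_ Dx)//]; rewrite FD //; exact: fD.
rewrite (ge0_negligible_integral _ (N := ~` D)) ?FD'D //.
- rewrite (eq_measure_integral mu); last first.
    by move=> A _ AD; change (mu (A `&` D) = mu A); rewrite setIidl.
  by apply: eq_integral => x /set_mem Dx; rewrite /= FD.
- exact: measurableC.
- apply: (measurable_comp mD') => //; first by move=> _ [x ? <-].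
  exact: measurable_funTS.
- by move=> x; exact: h0.
- by change (mu (~` D `&` D) = 0); rewrite setICl measure0.
Qed.

Lemma integral_push_on (g : T2 -> \bar R) : measurable_fun D' g ->
  \int[nu]_(y in D') g y = \int[mu]_(x in D) g (f x).
Proof.
move=> mg; rewrite integralE [RHS]integralE; congr (_ - _).
- rewrite (ge0_integral_push_on _ (measurable_funepos mg)); last first.
    by move=> y _; exact: funepos_ge0.
  by apply: eq_integral => x _; rewrite (funepos_comp g f).
- rewrite (ge0_integral_push_on _ (measurable_funeneg mg)); last first.
    by move=> y _; exact: funeneg_ge0.
  by apply: eq_integral => x _; rewrite (funeneg_comp g f).
Qed.

End integral_push_on.

Lemma open_setI_preimage {S U : topologicalType} (D : set S) (g : S -> U)
    (O : set U) :
  open D -> (forall x, D x -> {for x, continuous g}) -> open O ->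
  open (D `&` g @^-1` O).
Proof.
move=> oD cg oO; rewrite openE => x [Dx Ox].
apply: filterI; first exact: open_nbhs_nbhs.
exact: (cg x Dx O (open_nbhs_nbhs (conj oO Ox))).
Qed.

Section Rd_continuous_measurable.
Context {R : realType} {d : nat}.
Local Notation V := 'rV[R]_d.
Local Notation Rd := (Rd R d).

Lemma Rd_continuous_measurable_fun (D : set V) (g : V -> V) :
  open D -> (forall x, D x -> {for x, continuous g}) ->
  measurable_fun (D : set Rd) (g : Rd -> Rd).
Proof.
move=> oD cg; apply: (@measurability _ _ Rd Rd _ _ (@open V)) => // _ [B oB <-].
by apply: sub_sigma_algebra; exact: open_setI_preimage.
Qed.

Lemma Rd_continuous_measurable_realfun (D : set V) (g : V -> R) :
  open D -> (forall x, D x -> {for x, continuous g}) ->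
  measurable_fun (D : set Rd) g.
Proof.
move=> oD cg; apply: (measurability _ (RGenOpens.measurableE R)).
move=> _ [_ [a [b ->]] <-]; apply: sub_sigma_algebra.
by apply: open_setI_preimage => //; exact: interval_open.
Qed.

End Rd_continuous_measurable.

Section hahn_jordan.
Context {d : measure_display} {T : measurableType d} {R : realType}.
Variables (nu : {charge set T -> \bar R}) (P N : set T).
Variable nuPN : hahn_decomposition nu P N.

Lemma jordan_pos_setI A : measurable A -> jordan_pos nuPN A = nu (A `&` P).
Proof. by move=> mA; rewrite jordan_posE cjordan_posE /crestr0 mem_set. Qed.

Lemma jordan_neg_setI A : measurable A -> jordan_neg nuPN A = (- nu (A `&` N))%E.
Proof. by move=> mA; rewrite jordan_negE cjordan_negE /crestr0 mem_set. Qed.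

End hahn_jordan.

Section push_charge_retract.
Context {R : realType} {d : nat}.
Local Notation V := 'rV[R]_d.
Local Notation Rd := (Rd R d).

Lemma setI_preimage_partition {D D' : set Rd} {g : Rd -> Rd} {n}
    {E : 'I_n -> set Rd} :
  measurable D -> measurable_fun D g -> (forall x, D x -> D' (g x)) ->
  (forall i, measurable (E i)) -> trivIset setT E -> \bigcup_i E i = D' ->
  [/\ forall i, measurable (D `&` g @^-1` E i),
      trivIset setT (fun i => D `&` g @^-1` E i) &
      \bigcup_i (D `&` g @^-1` E i) = D].
Proof.
move=> mD mg gD mE tE UE; split=> [i||]; first exact: mg.
- apply/trivIsetP => i j _ _ ij; move/trivIsetP : tE => /(_ i j I I ij) E0.
  apply/seteqP; split=> // x [[_ Ei] [_ Ej]].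
  by have : (E i `&` E j) (g x) by []; rewrite E0.
- rewrite -setI_bigcupr -preimage_bigcup UE.
  by apply/seteqP; split=> [x []//|x Dx]; split=> //; exact: gD.
Qed.

Context {D D' : set Rd} {f h : V -> V}.
Hypotheses (mD : measurable D) (mD' : measurable D').
Hypotheses (mf : measurable_fun D (f : Rd -> Rd))
  (mh : measurable_fun D' (h : Rd -> Rd)).
Hypotheses (fD : forall x, D x -> D' (f x)) (hD : forall y, D' y -> D (h y)).
Hypothesis hf : forall x, D x -> h (f x) = x.

Lemma setI_preimage_retract (B : set Rd) :
  D `&` (f : Rd -> Rd) @^-1` (D' `&` (h : Rd -> Rd) @^-1` B) = D `&` B.
Proof.
apply/seteqP; split=> x [Dx].
- by case=> _; rewrite /= hf.
- by move=> Bx; split=> //; split; [exact: fD | rewrite /= hf].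
Qed.

(* [f] need not map measurable sets to measurable sets, so the Hahn
   decomposition is transported through the left inverse [h] instead. *)
Lemma hahn_decomposition_push {m : {charge set Rd -> \bar R}} {P N : set Rd} :
  hahn_decomposition m P N ->
  hahn_decomposition (push_charge mD mf m)
    ((D' `&` (h : Rd -> Rd) @^-1` P) `|` ~` D') (D' `&` (h : Rd -> Rd) @^-1` N).
Proof.
move=> [[mP posP] [mN negN] PNT PN0]; split.
- split=> [|B mB BP]; first by apply: measurableU; [exact: mh | exact: measurableC].
  rewrite /= /push; apply: posP; first exact: mf.
  move=> x [Dx Bfx]; have [[_]|/(_ (fD x Dx))//] := BP _ Bfx.
  by rewrite /= hf.
- split=> [|B mB BN]; first exact: mh.
  rewrite /= /push; apply: negN; first exact: mf.
  by move=> x [Dx Bfx]; have [_] := BN _ Bfx; rewrite /= hf.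
- apply/seteqP; split=> // y _.
  have [D'y|] := pselect (D' y); last by left; right.
  have : (P `|` N) (h y) by rewrite PNT.
  by case=> ?; [left; left | right].
- apply/seteqP; split=> // y [[[_ Py]|nD'y] [D'y Ny]]; last exact: nD'y.
  by have : (P `&` N) (h y) by []; rewrite PN0.
Qed.

Lemma jordan_pos_push (m : {charge set Rd -> \bar R}) A : measurable A ->
  jordan_pos (hahn_pickP (push_charge mD mf m)) A =
  jordan_pos (hahn_pickP m) (D `&` (f : Rd -> Rd) @^-1` A).
Proof.
move=> mA; rewrite !jordan_pos_setI //; last exact: mf.
have [-> _] := Hahn_decomposition_uniq (hahn_pickP _)
  (hahn_decomposition_push (hahn_pickP m)) mA.
rewrite /= /push; congr (m _); apply/seteqP; split=> x /=.
- move=> [Dx [Afx [[_]|/(_ (fD x Dx))//]]].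
  by rewrite /= hf.
- move=> [[Dx Afx] Px]; do 2!split=> //.
  by left; split; [exact: fD | rewrite /= hf].
Qed.

Lemma jordan_neg_push (m : {charge set Rd -> \bar R}) A : measurable A ->
  jordan_neg (hahn_pickP (push_charge mD mf m)) A =
  jordan_neg (hahn_pickP m) (D `&` (f : Rd -> Rd) @^-1` A).
Proof.
move=> mA; rewrite !jordan_neg_setI //; last exact: mf.
have [_ ->] := Hahn_decomposition_uniq (hahn_pickP _)
  (hahn_decomposition_push (hahn_pickP m)) mA.
rewrite /= /push; congr (- m _)%E; apply/seteqP; split=> x /=.
- by move=> [Dx [Afx [_]]]; rewrite /= hf.
- by move=> [[Dx Afx] Nx]; do 2!split=> //; split; [exact: fD | rewrite /= hf].
Qed.

Lemma cintegral_push (m : {charge set Rd -> \bar R}) (g : V -> R) :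
  measurable_fun D' (g : Rd -> R) ->
  cintegral (push_charge mD mf m) D' g = cintegral m D (g \o f).
Proof.
move=> mg; have mgE : measurable_fun D' (fun y : Rd => (g y)%:E).
  exact/measurable_EFinP.
rewrite /cintegral; congr (_ - _)%E.
- exact: (integral_push_on _ _ _ _ (f : Rd -> Rd) mD mD' mf fD
    (jordan_pos_push m) _ mgE).
- exact: (integral_push_on _ _ _ _ (f : Rd -> Rd) mD mD' mf fD
    (jordan_neg_push m) _ mgE).
Qed.

Lemma concentrated_push (m : {charge set Rd -> \bar R}) :
  concentrated D' (push_charge mD mf m).
Proof.
move=> A mA; rewrite /= /push; congr (m _); apply/seteqP; split=> x /=.
- by move=> [Dx Afx]; do 2!split=> //; exact: fD.
- by move=> [Dx [Afx _]].
Qed.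

Lemma total_variation_push (m : {charge set Rd -> \bar R}) :
  Defs.total_variation D' (push_charge mD mf m) = Defs.total_variation D m.
Proof.
rewrite /Defs.total_variation; congr (ereal_sup _); apply/seteqP; split=> s /=.
- move=> [n [E [mE tE UE ->]]].
  exists n, (fun i => D `&` (f : Rd -> Rd) @^-1` E i).
  by have [] := setI_preimage_partition mD mf fD mE tE UE.
- move=> [n [F [mF tF UF ->]]].
  exists n, (fun i => D' `&` (h : Rd -> Rd) @^-1` F i).
  have [? ? ?] := setI_preimage_partition mD' mh hD mF tF UF; split=> //.
  apply: eq_bigr => i _; rewrite /= /push setI_preimage_retract setIidr //.
  by move=> x Fx; rewrite -UF; exists i.
Qed.

Lemma opK_push {H : completeNormedModType R} (ip : H -> H -> R)
    (m : {charge set Rd -> \bar R}) {k k' : V -> H} :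
  (forall x, D x -> k' (f x) = k x) ->
  (forall p, measurable_fun D' (adjK ip k' p : Rd -> R)) ->
  opK ip D' k' (push_charge mD mf m) = opK ip D k m.
Proof.
move=> kk mk; rewrite /opK; congr (xget 0 _).
have cE p : cintegral (push_charge mD mf m) D' (adjK ip k' p) =
    cintegral m D (adjK ip k p).
  rewrite cintegral_push // /cintegral; congr (_ - _)%E;
    by apply: eq_integral => x /set_mem Dx /=; rewrite /adjK kk.
by apply/seteqP; split=> z /= zE p; rewrite zE cE.
Qed.

Lemma blasso_obj_push {H : completeNormedModType R} (ip : H -> H -> R)
    (y : H) (lam : R) (m : {charge set Rd -> \bar R}) {k k' : V -> H} :
  (forall x, D x -> k' (f x) = k x) ->
  (forall p, measurable_fun D' (adjK ip k' p : Rd -> R)) ->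
  blasso_obj ip y lam D' k' (push_charge mD mf m) = blasso_obj ip y lam D k m.
Proof.
by move=> kk mk; rewrite /blasso_obj (opK_push ip m kk mk) total_variation_push.
Qed.

End push_charge_retract.

Lemma blasso_solution_push {R : realType} {d : nat} {H : completeNormedModType R}
    (ip : H -> H -> R) (y : H) (lam : R) {D D' : set (Rd R d)}
    {f h : 'rV[R]_d -> 'rV[R]_d} {k k' : 'rV[R]_d -> H}
    (mD : measurable D) (mD' : measurable D')
    (mf : measurable_fun D (f : Rd R d -> Rd R d))
    (mh : measurable_fun D' (h : Rd R d -> Rd R d)) :
  (forall x, D x -> D' (f x)) -> (forall u, D' u -> D (h u)) ->
  (forall x, D x -> h (f x) = x) -> (forall u, D' u -> f (h u) = u) ->
  (forall x, D x -> k' (f x) = k x) -> (forall u, D' u -> k (h u) = k' u) ->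
  (forall p, measurable_fun D (adjK ip k p : Rd R d -> R)) ->
  (forall p, measurable_fun D' (adjK ip k' p : Rd R d -> R)) ->
  forall m, blasso_solution ip y lam D k m ->
  blasso_solution ip y lam D' k' (push_charge mD mf m).
Proof.
move=> fD hD hf fh kf kh mk mk' m [_ mmin]; split; first exact: concentrated_push.
move=> m' cm'; rewrite (blasso_obj_push mD mD' mf mh fD hD hf ip y lam m kf mk').
rewrite -(blasso_obj_push mD' mD mh mf hD fD fh ip y lam m' kh mk).
exact/mmin/concentrated_push.
Qed.

Lemma diff_comp_eq0 {R : realType} {d : nat} {W : normedModType R}
    {g : 'rV[R]_d -> W} {S : 'rV[R]_d -> 'rV[R]_d} {w : 'rV[R]_d} :
  differentiable S w -> differentiable g (S w) ->
  lin1_mx ('d S w) \in unitmx ->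
  (forall v, 'd (g \o S) w v = 0) <-> (forall v, 'd g (S w) v = 0).
Proof.
move=> dS dg uS.
have dgS v : 'd (g \o S) w v = 'd g (S w) ('d S w v) by rewrite [in LHS]diff_comp.
split=> h v; last by rewrite dgS h.
by rewrite -[v](mulmxKV uS) mul_rV_lin1 -dgS h.
Qed.

Section hilbert.
Context {R : realType} {d : nat} {H : completeNormedModType R} (ip : H -> H -> R).
Hypothesis hip : is_hilbert_inner_product ip.

Lemma ip_sym x y : ip x y = ip y x. Proof. by case: hip. Qed.

Lemma ip_norm x : `|x| ^+ 2 = ip x x. Proof. by case: hip. Qed.

Definition ipl (p x : H) : R^o := ip x p.

Lemma ipl_linear p : linear (ipl p).
Proof. by case: hip => _ + _ a x y; apply. Qed.

HB.instance Definition _ p := GRing.isLinear.Build R H R^o _ (ipl p) (ipl_linear p).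

Lemma ipDl x y z : ip (x + y) z = ip x z + ip y z.
Proof. exact: (linearD (ipl z)). Qed.

Lemma ipNl x z : ip (- x) z = - ip x z.
Proof. exact: (linearN (ipl z)). Qed.

Lemma ipDr x y z : ip z (x + y) = ip z x + ip z y.
Proof. by rewrite ip_sym ipDl !(ip_sym z). Qed.

Lemma ipZr a x z : ip z (a *: x) = a * ip z x.
Proof. by rewrite ip_sym [LHS](linearZ_LR (ipl z)) ip_sym. Qed.

Lemma ipNr x z : ip z (- x) = - ip z x.
Proof. by rewrite ip_sym ipNl ip_sym. Qed.

Lemma ip_polarization x p : ip x p = (`|x + p| ^+ 2 - `|x - p| ^+ 2) / 4.
Proof. rewrite !ip_norm !ipDl !ipDr !ipNl !ipNr (ip_sym p x); lra. Qed.

Lemma parallelogram (x y : H) :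
  `|x + y| ^+ 2 + `|x - y| ^+ 2 = 2 * `|x| ^+ 2 + 2 * `|y| ^+ 2.
Proof. rewrite !ip_norm !ipDl !ipDr !ipNl !ipNr; lra. Qed.

Lemma ipl_continuous p : continuous (ipl p).
Proof.
have -> : ipl p = fun x => (`|x + p| * `|x + p| - `|x - p| * `|x - p|) / 4.
  by apply: funext => x; rewrite /ipl ip_polarization !expr2.
move=> x; apply: cvgMr_tmp; apply: cvgB; apply: cvgM; apply: cvg_norm;
  (apply: cvgD || apply: cvgB); (exact: cvg_id || exact: cvg_cst).
Qed.

Lemma minnorm_unique {A : set H} {p q : H} :
  (forall r s, A r -> A s -> A (2^-1 *: (r + s))) ->
  A p -> A q -> (forall r, A r -> `|p| <= `|r|) ->
  (forall r, A r -> `|q| <= `|r|) -> p = q.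
Proof.
move=> Amid Ap Aq pmin qmin.
have pq : `|p| = `|q| by apply/eqP; rewrite eq_le pmin // qmin.
have := pmin _ (Amid _ _ Ap Aq).
rewrite normrZ ger0_norm ?invr_ge0 // => pmid.
have : `|p - q| ^+ 2 <= 0.
  have := parallelogram p q; rewrite -pq => par.
  have p0 := normr_ge0 p; nra.
by rewrite le_eqVlt ltNge sqr_ge0 orbF sqrf_eq0 normr_eq0 subr_eq0 => /eqP.
Qed.

Local Notation V := 'rV[R]_d.

Lemma differentiable_adjK {k : V -> H} {z : V} p :
  differentiable k z -> differentiable (adjK ip k p) z.
Proof.
move=> dk; have dl y : differentiable (ipl p) y.
  exact/linear_differentiable/ipl_continuous.
exact: (differentiable_comp dk (dl _)).
Qed.

Lemma diff_adjK (k : V -> H) p z v :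
  differentiable k z -> 'd (adjK ip k p) z v = ip ('d k z v) p.
Proof.
move=> dk; have cl := ipl_continuous p.
have dl y : differentiable (ipl p) y by exact: linear_differentiable.
by rewrite -[adjK ip k p]/(ipl p \o k) [in LHS]diff_comp // diff_lin.
Qed.

Lemma measurable_adjK {k : V -> H} {D : set V} p :
  open D -> (forall x, D x -> {for x, continuous k}) ->
  measurable_fun (D : set (Rd R d)) (adjK ip k p).
Proof.
move=> oD ck; apply: Rd_continuous_measurable_realfun => // x Dx.
exact: continuous_comp (ck x Dx) (ipl_continuous p _).
Qed.

Lemma precert_admissibleE {k : V -> H} {N} {Z : 'I_N -> V} r :
  (forall i, differentiable k (Z i)) ->
  precert_admissible ip k Z r <->
  forall i, ip (k (Z i)) r = 1 /\ forall v, ip ('d k (Z i) v) r = 0.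
Proof.
move=> dk; split=> h i; have [h1 h2] := h i; split=> // v;
  by [rewrite -diff_adjK | rewrite diff_adjK].
Qed.

Lemma precert_minnorm_unique (k : V -> H) N (Z : 'I_N -> V) p q :
  (forall i, differentiable k (Z i)) ->
  precert_minnorm ip k Z p -> precert_minnorm ip k Z q -> p = q.
Proof.
move=> dk [Ap pmin] [Aq qmin]; apply: (minnorm_unique _ Ap Aq pmin qmin).
move=> r s /(precert_admissibleE _ dk) Ar /(precert_admissibleE _ dk) As.
apply/(precert_admissibleE _ dk) => i.
have [r1 r2] := Ar i; have [s1 s2] := As i.
split=> [|v]; rewrite ipZr ipDr ?r1 ?s1 ?r2 ?s2; lra.
Qed.

Lemma precert_admissible_comp {k : V -> H} {S : V -> V} {N} {W : 'I_N -> V} r :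
  (forall i, differentiable S (W i)) -> (forall i, differentiable k (S (W i))) ->
  (forall i, lin1_mx ('d S (W i)) \in unitmx) ->
  precert_admissible ip (k \o S) W r <-> precert_admissible ip k (S \o W) r.
Proof.
move=> dS dk uS; rewrite /precert_admissible.
have -> : adjK ip (k \o S) r = adjK ip k r \o S by [].
have dkS i := diff_comp_eq0 (dS i) (differentiable_adjK r (dk i)) (uS i).
rewrite /=; split=> h i; have [h1 h2] := h i.
- exact: conj h1 ((dkS i).1 h2).
- exact: conj h1 ((dkS i).2 h2).
Qed.

Lemma precert_minnorm_comp {k : V -> H} {S : V -> V} {N} {W : 'I_N -> V} r :
  (forall i, differentiable S (W i)) -> (forall i, differentiable k (S (W i))) ->
  (forall i, lin1_mx ('d S (W i)) \in unitmx) ->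
  precert_minnorm ip (k \o S) W r <-> precert_minnorm ip k (S \o W) r.
Proof.
move=> dS dk uS; have adm s := precert_admissible_comp s dS dk uS.
split=> -[Ar rmin]; split=> [|s As].
- exact: (adm r).1 Ar.
- by apply: rmin; exact: (adm s).2 As.
- exact: (adm r).2 Ar.
- by apply: rmin; exact: (adm s).1 As.
Qed.

Lemma precert_minnorm_adjK_comp {k : V -> H} {S : V -> V} {N} {W : 'I_N -> V} p q :
  (forall i, differentiable S (W i)) -> (forall i, differentiable k (S (W i))) ->
  (forall i, lin1_mx ('d S (W i)) \in unitmx) ->
  precert_minnorm ip k (S \o W) p -> precert_minnorm ip (k \o S) W q ->
  adjK ip (k \o S) q = adjK ip k p \o S.
Proof.
move=> dS dk uS hp /(precert_minnorm_comp _ dS dk uS) hq.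
by rewrite (precert_minnorm_unique _ _ _ _ _ dk hp hq).
Qed.

End hilbert.

Theorem mainTheorem7 (R : realType) (d : nat)
  (H : completeNormedModType R) (ip : H -> H -> R)
  (X Y : set 'rV[R]_d) (phi : 'rV[R]_d -> H)
  (T Tinv : 'rV[R]_d -> 'rV[R]_d) (lam : R) (y : H)
  (mX : measurable (X : set (Rd R d)))
  (mT : measurable_fun (X : set (Rd R d)) (T : Rd R d -> Rd R d)) :
  is_hilbert_inner_product ip ->
  is_domain X -> is_domain Y ->
  (forall x, X x -> differentiable phi x) ->
  (* T : X -> Y bijection with inverse Tinv *)
  (forall x, X x -> Y (T x)) -> (forall u, Y u -> X (Tinv u)) ->
  (forall x, X x -> Tinv (T x) = x) -> (forall u, Y u -> T (Tinv u) = u) ->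
  (forall x, X x -> differentiable T x) ->
  (forall u, Y u -> differentiable Tinv u) ->
  (* the Jacobian matrix of Tinv is invertible everywhere *)
  (forall u, Y u -> lin1_mx ('d Tinv u) \in unitmx) ->
  0 < lam ->
  (forall mu : {charge set Rd R d -> \bar R},
     blasso_solution ip y lam X phi mu ->
     blasso_solution ip y lam Y (phi \o Tinv) (push_charge mX mT mu) /\
     (forall u, Y u ->
        dual_cert ip y lam Y (phi \o Tinv) (push_charge mX mT mu) u
        = dual_cert ip y lam X phi mu (Tinv u)))
  /\
  (forall (N : nat) (a : 'I_N -> R) (Z : 'I_N -> 'rV[R]_d),
     (forall i, X (Z i)) ->
     y = \sum_(i < N) a i *: phi (Z i) ->
     forall p q : H,
       precert_minnorm ip phi Z p ->
       precert_minnorm ip (phi \o Tinv) (T \o Z) q ->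
       forall u, Y u -> adjK ip (phi \o Tinv) q u = adjK ip phi p (Tinv u)).
Proof.
move=> hip [_ oX _] [_ oY _] dphi XY YX TinvT TTinv _ dTinv unitT _.
have cphi x : X x -> {for x, continuous phi}.
  by move=> Xx; exact: differentiable_continuous (dphi x Xx).
have cphiTinv u : Y u -> {for u, continuous (phi \o Tinv)}.
  move=> Yu; apply: continuous_comp; last exact/cphi/YX.
  exact: differentiable_continuous (dTinv u Yu).
have mY : measurable (Y : set (Rd R d)) by exact: sub_sigma_algebra.
have mTinv : measurable_fun (Y : set (Rd R d)) (Tinv : Rd R d -> Rd R d).
  by apply: Rd_continuous_measurable_fun => // u /dTinv/differentiable_continuous.
have phiTinvT x : X x -> (phi \o Tinv) (T x) = phi x.
  by move=> Xx; rewrite /= TinvT.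
have madjX p := measurable_adjK ip hip p oX cphi.
have madjY p := measurable_adjK ip hip p oY cphiTinv.
split.
  move=> mu hmu; split.
    exact: (blasso_solution_push ip y lam mX mY mT mTinv XY YX TinvT TTinv
      phiTinvT (fun u _ => erefl) madjX madjY).
  move=> u _.
  by rewrite /dual_cert (opK_push mX mY mT mTinv XY TinvT ip mu phiTinvT madjY).
(* the pre-certificate does not depend on [y], so its representation is unused *)
move=> N a Z ZX _ p q hp hq u _.
have TZ i : Y ((T \o Z) i) by exact: XY.
have dphiZ i : differentiable phi (Tinv (T (Z i))) by rewrite TinvT //; exact: dphi.
have ZE : Tinv \o (T \o Z) = Z by apply: funext => i /=; rewrite TinvT.
rewrite -ZE in hp.
by rewrite (precert_minnorm_adjK_comp ip hip p q (fun i => dTinv _ (TZ i)) dphiZ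
  (fun i => unitT _ (TZ i)) hp hq).
Qed.
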